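(* Let $x\in(0,1)$ be irrational, and let $p^E_n/q^E_n$ ($n\ge1$) be the EICF convergents of $1-x$. Put $P_n=q^E_n-p^E_n$ and $Q_n=q^E_n$, so $P_n/Q_n=1-p^E_n/q^E_n$. For every $n\ge1$ such that $P_n$ and $Q_n$ are both odd, $P_n/Q_n$ is a best $1$-rational approximation of $x$, and hence is a principal convergent of the OOCF expansion of $x$.
   Context: Rationals are written $p/q$ with $p\in\mathbb Z$, $q\in\mathbb N$, $\gcd(p,q)=1$; $p/q$ is a $1$-rational if $p,q$ are both odd. For irrational $x$, a $1$-rational $p/q$ is a best $1$-rational approximation of $x$ if $|qx-p|<|bx-a|$ for every $1$-rational $a/b\ne p/q$ with $0<b\le q$. EICF: the map $T_E:[0,1]\to[0,1]$ is $T_E(y)=\frac1y-2k$ for $y\in[\frac1{2k+1},\frac1{2k}]$, $T_E(y)=2k-\frac1y$ for $y\in[\frac1{2k},\frac1{2k-1}]$ ($k\ge1$), $T_E(0)=0$. For irrational $y\in(0,1)$, its EICF digits are $(b_n,\eta_n)=(2k,1)$ if $T_E^{n-1}(y)\in[\frac1{2k+1},\frac1{2k}]$ and $(2k,-1)$ if $T_E^{n-1}(y)\in[\frac1{2k},\frac1{2k-1}]$, and its $n$-th EICF convergent is $p^E_n/q^E_n=\cfrac{1}{b_1+\cfrac{\eta_1}{b_2+\cfrac{\eta_2}{\ddots+\cfrac{\eta_{n-1}}{b_n}}}}$ in lowest terms with $q^E_n>0$. OOCF: digits $D=\{(1,1)\}\cup\{(a,\varepsilon):a\ge2,\ \varepsilon=\pm1\}$;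 $B(k+1,-1)=[\frac{k-1}{k},\frac{2k-1}{2k+1}]$, $B(k,1)=[\frac{2k-1}{2k+1},\frac{k}{k+1}]$ ($k\ge1$); $T(x)=\frac{kx-(k-1)}{k-(k+1)x}$ on $B(k+1,-1)$, $T(x)=\frac{k-(k+1)x}{kx-(k-1)}$ on $B(k,1)$, $T(1)=1$. The OOCF expansion of irrational $x\in(0,1)$ is the unique sequence $(a_n,\varepsilon_n)\in D$ with $T^{n-1}(x)\in B(a_n,\varepsilon_n)$ for all $n\ge1$; its $n$-th principal convergent is $1-\cfrac{1}{a_1+\cfrac{\varepsilon_1}{2-\cfrac{1}{\ddots\ \cfrac{\varepsilon_{n-1}}{2-\cfrac{1}{a_n+\varepsilon_n/2}}}}}$. *)

From Stdlib Require Import Reals ZArith.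
Open Scope R_scope.

Definition irrational (x : R) : Prop :=
  forall p q : Z, q <> 0%Z -> x <> IZR p / IZR q.

(* floor r = up r - 1  (up r is the unique integer with r < up r <= r + 1) *)
Definition Zfloor (r : R) : Z := (up r - 1)%Z.

(* the k with 1/y in [2k-1, 2k+1] (for 0 < y <= 1) *)
Definition eicf_k (y : R) : Z := Zfloor ((/ y + 1) / 2).

(* T_E : [0,1] -> [0,1];  T_E(y) = 1/y - 2k on [1/(2k+1),1/(2k)],
   T_E(y) = 2k - 1/y on [1/(2k),1/(2k-1)], T_E(0) = 0 *)
Definition TE (y : R) : R :=
  if Req_EM_T y 0 then 0
  else let k := IZR (eicf_k y) in
       if Rle_dec (2 * k) (/ y) then / y - 2 * k else 2 * k - / y.

Definition eicf_digit_ok (y : R) (b eta : Z) : Prop :=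
  exists k : Z, (1 <= k)%Z /\ b = (2 * k)%Z /\
    ((eta = 1%Z /\ / (2 * IZR k + 1) <= y <= / (2 * IZR k)) \/
     (eta = (-1)%Z /\ / (2 * IZR k) <= y <= / (2 * IZR k - 1))).

Fixpoint eicf_tail (b eta : nat -> Z) (i l : nat) : R :=
  match l with
  | O => IZR (b i)
  | S l' => IZR (b i) + IZR (eta i) / eicf_tail b eta (S i) l'
  end.

Definition eicf_conv (b eta : nat -> Z) (n : nat) : R :=
  / eicf_tail b eta 1 (n - 1).

(* the k with x in [(k-1)/k, k/(k+1)) *)
Definition oocf_k (x : R) : Z := Zfloor (/ (1 - x)).

(* T on B(k+1,-1) = [(k-1)/k,(2k-1)/(2k+1)] and B(k,1) = [(2k-1)/(2k+1),k/(k+1)] *)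
Definition Toocf (x : R) : R :=
  if Req_EM_T x 1 then 1
  else let k := IZR (oocf_k x) in
       if Rle_dec x ((2 * k - 1) / (2 * k + 1))
       then (k * x - (k - 1)) / (k - (k + 1) * x)
       else (k - (k + 1) * x) / (k * x - (k - 1)).

Definition oocf_D (a e : Z) : Prop :=
  (a = 1%Z /\ e = 1%Z) \/ ((2 <= a)%Z /\ (e = 1%Z \/ e = (-1)%Z)).

Definition oocf_B (a e : Z) (y : R) : Prop :=
  (e = 1%Z /\ (2 * IZR a - 1) / (2 * IZR a + 1) <= y <= IZR a / (IZR a + 1)) \/
  (e = (-1)%Z /\ let k := IZR a - 1 in (k - 1) / k <= y <= (2 * k - 1) / (2 * k + 1)).

Fixpoint oocf_tail (a e : nat -> Z) (i l : nat) : R :=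
  match l with
  | O => IZR (a i) + IZR (e i) / 2
  | S l' => IZR (a i) + IZR (e i) / (2 - / oocf_tail a e (S i) l')
  end.

Definition oocf_conv (a e : nat -> Z) (n : nat) : R :=
  1 - / oocf_tail a e 1 (n - 1).

Definition is_oocf_expansion (x : R) (a e : nat -> Z) : Prop :=
  forall n : nat, (1 <= n)%nat ->
    oocf_D (a n) (e n) /\ oocf_B (a n) (e n) (Nat.iter (n - 1) Toocf x).

Definition oocf_principal_convergent (x : R) (p q : Z) : Prop :=
  exists a e : nat -> Z, is_oocf_expansion x a e /\
    exists n : nat, (1 <= n)%nat /\ IZR p / IZR q = oocf_conv a e n.

Definition one_rational (p q : Z) : Prop :=
  (0 < q)%Z /\ Z.gcd p q = 1%Z /\ Z.odd p = true /\ Z.odd q = true.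

Definition best_one_rational_approx (x : R) (p q : Z) : Prop :=
  one_rational p q /\
  forall a b : Z, one_rational a b -> IZR a / IZR b <> IZR p / IZR q ->
    (0 < b <= q)%Z ->
    Rabs (IZR q * x - IZR p) < Rabs (IZR b * x - IZR a).

(* Put y = 1 - x: the 1-rational (q - p)/q then corresponds to p/q with p even and q odd.
   The EICF of y and the OOCF of x are both encoded by unimodular integer matrices with
   y = (A t + P)/(B t + Q), where P/Q is the current convergent and t the tail. For a rival
   fraction c/d write (c, d) = u (A, B) + v (P, Q); then t (d y - c) = (Q y - P)(v t - u), so
   P/Q approximates y better as soon as |v t - u| > t. Parity makes u even and nonzero and v
   odd, and the bound follows from d <= Q and |B| < Q for the EICF, and from d being below
   the next OOCF denominator together with the cylinder of the next OOCF digit for the OOCF.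
   Hence an EICF convergent with odd denominator is a best even/odd approximation of y; its
   denominator lies between two consecutive OOCF denominators, and the two best-approximation
   properties force it to coincide with the OOCF convergent there. *)

From Pilot Require Import Defs.
From Stdlib Require Import Reals ZArith Lra Lia.
Open Scope R_scope.

Lemma Zfloor_spec r : IZR (Defs.Zfloor r) <= r < IZR (Defs.Zfloor r) + 1.
Proof.
  unfold Defs.Zfloor. rewrite minus_IZR. destruct (archimed r). simpl. lra.
Qed.

Lemma IZR_lt_succ_le m k : IZR m < IZR k + 1 -> (m <= k)%Z.
Proof. intro H. rewrite <- plus_IZR in H. apply lt_IZR in H. lia. Qed.

Lemma div_le_iff a c z : 0 < c -> (a / c <= z <-> a <= z * c).
Proof.
  intro Hc. split; intro H.
  - apply Rmult_le_compat_r with (r := c) in H; [|lra].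
    replace (a / c * c) with a in H by (field; lra). exact H.
  - apply Rmult_le_reg_r with c; [lra|]. replace (a / c * c) with a by (field; lra). exact H.
Qed.

Lemma le_div_iff a c z : 0 < c -> (z <= a / c <-> z * c <= a).
Proof.
  intro Hc. split; intro H.
  - apply Rmult_le_compat_r with (r := c) in H; [|lra].
    replace (a / c * c) with a in H by (field; lra). exact H.
  - apply Rmult_le_reg_r with c; [lra|]. replace (a / c * c) with a by (field; lra). exact H.
Qed.

Lemma irrational_mul_sub y r s : irrational y -> s <> 0%Z -> IZR s * y - IZR r <> 0.
Proof.
  intros Hy Hs E. apply (Hy r s Hs).
  assert (IZR s <> 0) by (apply not_0_IZR; exact Hs).
  apply Rmult_eq_reg_r with (IZR s); auto. field_simplify; auto. lra.
Qed.

Lemma irrational_ne_IZR y r : irrational y -> y <> IZR r.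
Proof. intros Hy E. apply (Hy r 1%Z); [lia|]. rewrite E. field. Qed.

Lemma irrational_one_minus y : irrational y -> irrational (1 - y).
Proof.
  intros Hy r s Hs E. apply (Hy (s - r)%Z s Hs).
  assert (IZR s <> 0) by (apply not_0_IZR; exact Hs).
  rewrite minus_IZR. replace y with (1 - (1 - y)) by ring. rewrite E. field. auto.
Qed.

Lemma gcd_sub_l p q : Z.gcd p q = 1%Z -> Z.gcd (q - p) q = 1%Z.
Proof.
  intro H. apply Z.gcd_bezout in H. destruct H as [u [v H]].
  apply Z.bezout_1_gcd. exists (- u)%Z, (v + u)%Z. lia.
Qed.

Lemma reduced_fraction_unique p q P Q :
  (0 < q)%Z -> (0 < Q)%Z -> Z.gcd p q = 1%Z -> Z.gcd P Q = 1%Z ->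
  IZR p / IZR q = IZR P / IZR Q -> p = P /\ q = Q.
Proof.
  intros Hq HQ H1 H2 E.
  assert (IZR q <> 0) by (apply not_0_IZR; lia).
  assert (IZR Q <> 0) by (apply not_0_IZR; lia).
  assert (Hcross : (p * Q = P * q)%Z).
  { apply eq_IZR. rewrite !mult_IZR.
    replace (IZR p) with (IZR P / IZR Q * IZR q) by (rewrite <- E; field; auto). field. auto. }
  assert (D1 : (q | Q)%Z) by (apply Z.gauss with p; [exists P; lia | rewrite Z.gcd_comm; exact H1]).
  assert (D2 : (Q | q)%Z) by (apply Z.gauss with P; [exists p; lia | rewrite Z.gcd_comm; exact H2]).
  assert (q = Q) by (apply Z.divide_antisym_nonneg; auto; lia).
  subst Q. split; [nia | reflexivity].
Qed.

Lemma exists_bracketing_index (f : nat -> Z) X :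
  (forall k, (f k < f (S k))%Z) -> (f 0%nat <= X)%Z -> exists m, (f m <= X < f (S m))%Z.
Proof.
  intros Hf H0.
  assert (Hgrow : forall k, (f 0%nat + Z.of_nat k <= f k)%Z).
  { induction k as [|k IH]; [simpl; lia | specialize (Hf k); lia]. }
  assert (Hstep : forall N, (exists m, (f m <= X < f (S m))%Z) \/ (f N <= X)%Z).
  { induction N as [|N [IH | IH]]; [right; exact H0 | left; exact IH|].
    destruct (Z_lt_le_dec X (f (S N))); [left; exists N; lia | right; lia]. }
  destruct (Hstep (S (Z.to_nat (X - f 0%nat)))) as [Hm | Hle]; [exact Hm|].
  specialize (Hgrow (S (Z.to_nat (X - f 0%nat)))). lia.
Qed.

(** * Moebius matrices *)

Record mat := Mat { mA : Z; mP : Z; mB : Z; mQ : Z }.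

Definition mob (M : mat) (s : R) : R :=
  (IZR (mA M) * s + IZR (mP M)) / (IZR (mB M) * s + IZR (mQ M)).

Definition mat1 : mat := Mat 1 0 0 1.

Definition unimodular (M : mat) : Prop :=
  (mA M * mQ M - mB M * mP M = 1 \/ mA M * mQ M - mB M * mP M = -1)%Z.

Lemma mob1 s : mob mat1 s = s.
Proof. unfold mob; simpl. field. Qed.

Lemma mob_0 M : mob M 0 = IZR (mP M) / IZR (mQ M).
Proof. unfold mob. f_equal; ring. Qed.

Lemma mob_cross M t : IZR (mB M) * t + IZR (mQ M) <> 0 ->
  mob M t * (IZR (mB M) * t + IZR (mQ M)) = IZR (mA M) * t + IZR (mP M).
Proof. intro H. unfold mob. field. exact H. Qed.

Lemma unimodular_mat1 : unimodular mat1.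
Proof. left. reflexivity. Qed.

Lemma unimodular_gcd M : unimodular M -> Z.gcd (mP M) (mQ M) = 1%Z.
Proof.
  intros [H|H]; apply Z.bezout_1_gcd.
  - exists (- mB M)%Z, (mA M). lia.
  - exists (mB M), (- mA M)%Z. lia.
Qed.

Lemma unimodular_coords M c d : unimodular M ->
  exists u v, (u * mA M + v * mP M = c /\ u * mB M + v * mQ M = d)%Z.
Proof.
  intros [H|H].
  - exists (c * mQ M - d * mP M)%Z, (mA M * d - mB M * c)%Z. split.
    + transitivity (c * (mA M * mQ M - mB M * mP M))%Z; [ring | rewrite H; ring].
    + transitivity (d * (mA M * mQ M - mB M * mP M))%Z; [ring | rewrite H; ring].
  - exists (d * mP M - c * mQ M)%Z, (mB M * c - mA M * d)%Z. split.
    + transitivity (- c * (mA M * mQ M - mB M * mP M))%Z; [ring | rewrite H; ring].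
    + transitivity (- d * (mA M * mQ M - mB M * mP M))%Z; [ring | rewrite H; ring].
Qed.

Lemma mob_irrational M s : IZR (mB M) * s + IZR (mQ M) <> 0 ->
  irrational (mob M s) -> irrational s.
Proof.
  intros Hden Hirr r t Ht Hs. subst s.
  assert (IZR t <> 0) by (apply not_0_IZR; exact Ht).
  assert (Hnum : IZR (mB M) * IZR r + IZR (mQ M) * IZR t <> 0).
  { intro E. apply Hden. replace (IZR (mB M) * (IZR r / IZR t) + IZR (mQ M))
      with ((IZR (mB M) * IZR r + IZR (mQ M) * IZR t) / IZR t) by (field; auto).
    rewrite E. unfold Rdiv. ring. }
  apply (Hirr (mA M * r + mP M * t) (mB M * r + mQ M * t))%Z.
  - intro E. apply Hnum. rewrite <- !mult_IZR, <- plus_IZR, E. reflexivity.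
  - unfold mob. rewrite !plus_IZR, !mult_IZR. field. auto.
Qed.

Fixpoint compose_from (F : nat -> R -> R) (i l : nat) (s : R) : R :=
  match l with
  | O => F i s
  | S l' => F i (compose_from F (S i) l' s)
  end.

Lemma compose_from_snoc F l : forall i s,
  compose_from F i (S l) s = compose_from F i l (F (i + l + 1)%nat s).
Proof.
  induction l as [|l IH]; intros i s.
  - simpl. replace (i + 0 + 1)%nat with (S i) by lia. reflexivity.
  - change (F i (compose_from F (S i) (S l) s) = compose_from F i (S l) (F (i + S l + 1)%nat s)).
    rewrite IH. replace (S i + l + 1)%nat with (i + S l + 1)%nat by lia. reflexivity.
Qed.

Lemma compose_from_range (F : nat -> R -> R) :
  (forall i s, (1 <= i)%nat -> 0 <= s <= 1 -> 0 < F i s <= 1) ->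
  forall l i s, (1 <= i)%nat -> 0 <= s <= 1 -> 0 < compose_from F i l s <= 1.
Proof.
  intros HF l. induction l as [|l IH]; intros i s Hi Hs; simpl.
  - exact (HF i s Hi Hs).
  - apply HF; [exact Hi|]. destruct (IH (S i) s ltac:(lia) Hs). lra.
Qed.

Fixpoint mat_seq (step : mat -> nat -> mat) (n : nat) : mat :=
  match n with
  | O => mat1
  | S m => step (mat_seq step m) (S m)
  end.

Section MatSeq.

Variables (F : nat -> R -> R) (step : mat -> nat -> mat) (Inv : mat -> Prop).
Hypothesis Inv_mat1 : Inv mat1.
Hypothesis Inv_step : forall M i, (1 <= i)%nat -> Inv M -> Inv (step M i).
Hypothesis mob_step : forall M i s, (1 <= i)%nat -> Inv M -> 0 <= s <= 1 ->
  mob (step M i) s = mob M (F i s).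
Hypothesis F_range : forall i s, (1 <= i)%nat -> 0 <= s <= 1 -> 0 <= F i s <= 1.

Lemma mat_seq_inv n : Inv (mat_seq step n).
Proof. induction n as [|n IH]; [exact Inv_mat1 | apply Inv_step; [lia | exact IH]]. Qed.

Lemma compose_from_mat_seq l : forall s, 0 <= s <= 1 ->
  compose_from F 1 l s = mob (mat_seq step (S l)) s.
Proof.
  induction l as [|l IH]; intros s Hs.
  - simpl. rewrite mob_step, mob1 by (auto; lia). reflexivity.
  - rewrite compose_from_snoc, IH by (apply F_range; [lia | exact Hs]).
    replace (1 + l + 1)%nat with (S (S l)) by lia.
    symmetry. apply mob_step; [lia | apply mat_seq_inv | exact Hs].
Qed.

End MatSeq.

(** * Comparing approximations *)

Definition best_even_odd_approx (y : R) (P Q : Z) : Prop :=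
  forall c d : Z, Z.odd c = false -> Z.odd d = true -> (0 < d <= Q)%Z ->
    IZR c / IZR d <> IZR P / IZR Q ->
    Rabs (IZR Q * y - IZR P) < Rabs (IZR d * y - IZR c).

Lemma best_one_rational_approx_one_minus x P Q : (0 < Q)%Z -> Z.gcd P Q = 1%Z ->
  Z.odd P = false -> Z.odd Q = true -> best_even_odd_approx (1 - x) P Q ->
  best_one_rational_approx x (Q - P) Q.
Proof.
  intros HQ Hgcd HP HQo Hbest. split.
  - repeat split; [exact HQ | apply gcd_sub_l, Hgcd | rewrite Z.odd_sub, HP, HQo | exact HQo].
    reflexivity.
  - intros a b [Hb [_ [Hao Hbo]]] Hne Hbq.
    assert (IZR b <> 0) by (apply not_0_IZR; lia).
    assert (IZR Q <> 0) by (apply not_0_IZR; lia).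
    replace (IZR Q * x - IZR (Q - P)) with (- (IZR Q * (1 - x) - IZR P))
      by (rewrite minus_IZR; ring).
    replace (IZR b * x - IZR a) with (- (IZR b * (1 - x) - IZR (b - a)))
      by (rewrite minus_IZR; ring).
    rewrite !Rabs_Ropp. apply Hbest; [rewrite Z.odd_sub, Hao, Hbo; reflexivity | exact Hbo | lia|].
    intro E. apply Hne. rewrite minus_IZR in E |- *.
    transitivity (1 - (IZR b - IZR a) / IZR b); [field; auto|].
    rewrite E. field. auto.
Qed.

Lemma approx_error_identity M y t u v :
  y * (IZR (mB M) * t + IZR (mQ M)) = IZR (mA M) * t + IZR (mP M) ->
  t * (IZR (u * mB M + v * mQ M) * y - IZR (u * mA M + v * mP M)) =
  (IZR (mQ M) * y - IZR (mP M)) * (IZR v * t - IZR u).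
Proof.
  intro Hy. rewrite !plus_IZR, !mult_IZR.
  transitivity (IZR u * (y * (IZR (mB M) * t + IZR (mQ M)) - IZR (mA M) * t - IZR (mP M))
                + (IZR (mQ M) * y - IZR (mP M)) * (IZR v * t - IZR u)); [ring|].
  rewrite Hy. ring.
Qed.

Lemma even_odd_coords_parity A P B Q c d u v :
  Z.odd A = true -> Z.odd P = false -> Z.odd Q = true -> Z.odd c = false -> Z.odd d = true ->
  (u * A + v * P = c)%Z -> (u * B + v * Q = d)%Z -> Z.odd u = false /\ Z.odd v = true.
Proof.
  intros HA HP HQ Hc Hd <- <-.
  rewrite Z.odd_add, !Z.odd_mul, HA, HP, Bool.andb_true_r, Bool.andb_false_r in Hc.
  destruct (Z.odd u) eqn:Hu; [discriminate | split; [reflexivity|]].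
  rewrite Z.odd_add, !Z.odd_mul, Hu, HQ, Bool.andb_true_r in Hd. exact Hd.
Qed.

Lemma better_approx_of_tail_bound M y t c d :
  unimodular M -> Z.odd (mA M) = true -> Z.odd (mP M) = false -> Z.odd (mQ M) = true ->
  (0 < mQ M)%Z -> y * (IZR (mB M) * t + IZR (mQ M)) = IZR (mA M) * t + IZR (mP M) ->
  0 < t -> irrational y ->
  Z.odd c = false -> Z.odd d = true -> IZR c / IZR d <> IZR (mP M) / IZR (mQ M) ->
  (forall u v : Z, Z.odd u = false -> u <> 0%Z -> Z.odd v = true ->
     (u * mB M + v * mQ M)%Z = d -> t < Rabs (IZR v * t - IZR u)) ->
  Rabs (IZR (mQ M) * y - IZR (mP M)) < Rabs (IZR d * y - IZR c).
Proof.
  intros HM HA HP HQ HQ0 Hy Ht Hirr Hc Hd Hne Hbound.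
  destruct (unimodular_coords M c d HM) as [u [v [Ec Ed]]].
  destruct (even_odd_coords_parity _ _ _ _ _ _ _ _ HA HP HQ Hc Hd Ec Ed) as [Hu Hv].
  assert (Hu0 : u <> 0%Z).
  { intros ->. apply Hne. subst c d. simpl. rewrite !mult_IZR.
    assert (IZR v <> 0) by (apply not_0_IZR; intros ->; discriminate).
    assert (IZR (mQ M) <> 0) by (apply not_0_IZR; lia).
    field. auto. }
  assert (Htail := Hbound u v Hu Hu0 Hv Ed).
  assert (Herr : 0 < Rabs (IZR (mQ M) * y - IZR (mP M)))
    by (apply Rabs_pos_lt, irrational_mul_sub; auto; lia).
  assert (Hid := f_equal Rabs (approx_error_identity M y t u v Hy)).
  rewrite Ec, Ed, !Rabs_mult, (Rabs_pos_eq t) in Hid by lra.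
  apply Rmult_lt_reg_l with t; [exact Ht|]. rewrite Hid.
  rewrite (Rmult_comm t). apply Rmult_lt_compat_l; assumption.
Qed.

Lemma tail_bound_cases u v t : Z.odd u = false -> u <> 0%Z -> Z.odd v = true ->
  0 < t < 1 -> Rabs (IZR v * t - IZR u) <= t ->
  ((u < 0 /\ v < u) \/ (0 < u < v))%Z.
Proof.
  intros Hu Hu0 Hv Ht Habs.
  assert (Huv : u <> v) by (intros ->; congruence).
  assert (Hband : (IZR v - 1) * t <= IZR u <= (IZR v + 1) * t)
    by (unfold Rabs in Habs; destruct Rcase_abs in Habs; split; nra).
  destruct (Z_lt_le_dec u 0) as [Hneg|Hpos]; [left|right].
  - assert (IZR u < 0) by (apply IZR_lt; exact Hneg).
    assert (Hlt : IZR v - 1 < IZR u) by nra.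
    rewrite <- minus_IZR in Hlt. apply lt_IZR in Hlt. lia.
  - assert (0 < IZR u) by (apply IZR_lt; lia).
    assert (Hlt : IZR u < IZR v + 1) by nra.
    rewrite <- plus_IZR in Hlt. apply lt_IZR in Hlt. lia.
Qed.

(** * The EICF side *)

Definition eicf_digit (bb et : Z) : Prop :=
  (2 <= bb)%Z /\ Z.odd bb = false /\ (et = 1 \/ et = -1)%Z.

Lemma eicf_digit_ok_digit r bb et : eicf_digit_ok r bb et -> eicf_digit bb et.
Proof.
  intros [k [Hk [-> Hc]]]. split; [lia | split].
  - rewrite Z.odd_mul. reflexivity.
  - destruct Hc as [[-> _] | [-> _]]; auto.
Qed.

Lemma eicf_digit_ok_inv_range r bb et : eicf_digit_ok r bb et ->
  0 < r /\ exists k, (1 <= k)%Z /\ bb = (2 * k)%Z /\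
    ((et = 1%Z /\ 2 * IZR k <= / r <= 2 * IZR k + 1) \/
     (et = (-1)%Z /\ 2 * IZR k - 1 <= / r <= 2 * IZR k)).
Proof.
  intros [k [Hk [Hb Hc]]].
  assert (1 <= IZR k) by (apply IZR_le; lia).
  assert (Hrecip : forall lo hi, 0 < lo <= hi -> / hi <= r <= / lo -> 0 < r /\ lo <= / r <= hi).
  { intros lo hi Hlo [H1 H2].
    assert (Hr0 : 0 < r)
      by (apply Rlt_le_trans with (/ hi); [apply Rinv_0_lt_compat; lra | exact H1]).
    split; [assumption|]. split.
    - rewrite <- (Rinv_inv lo). apply Rinv_le_contravar; [exact Hr0 | exact H2].
    - rewrite <- (Rinv_inv hi). apply Rinv_le_contravar; [apply Rinv_0_lt_compat; lra | exact H1]. }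
  destruct Hc as [[He Hr] | [He Hr]];
    [destruct (Hrecip (2 * IZR k) (2 * IZR k + 1) ltac:(lra) Hr) as [Hr0 Hw]
    |destruct (Hrecip (2 * IZR k - 1) (2 * IZR k) ltac:(lra) Hr) as [Hr0 Hw]];
    (split; [exact Hr0 | exists k; auto]).
Qed.

Lemma TE_spec r k et : 0 < r -> (1 <= k)%Z ->
  (et = 1%Z /\ 2 * IZR k <= / r <= 2 * IZR k + 1) \/
  (et = (-1)%Z /\ 2 * IZR k - 1 <= / r <= 2 * IZR k) ->
  IZR (2 * k) + IZR et * TE r = / r.
Proof.
  intros Hr Hk Hc. rewrite mult_IZR.
  unfold TE. destruct (Req_EM_T r 0) as [E|_]; [lra|].
  unfold eicf_k. cbv zeta.
  match goal with |- context [Defs.Zfloor ?z] =>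
    destruct (Zfloor_spec z) as [Hm1 Hm2]; set (m := Defs.Zfloor z) in * end.
  assert (k <= m)%Z by (apply IZR_lt_succ_le; destruct Hc as [[_ Hw] | [_ Hw]]; lra).
  destruct Hc as [[-> Hw] | [-> Hw]]; simpl (IZR 1); simpl (IZR (-1)).
  - assert (m <= k + 1)%Z by (apply IZR_lt_succ_le; rewrite plus_IZR; simpl (IZR 1); lra).
    assert (Hm : m = k \/ m = (k + 1)%Z) by lia.
    destruct (Rle_dec (2 * IZR m) (/ r)); destruct Hm as [E | E];
      rewrite E in *; rewrite ?plus_IZR in *; try simpl (IZR 1) in *; lra.
  - assert (m <= k)%Z by (apply IZR_lt_succ_le; lra).
    replace m with k in * by lia. destruct (Rle_dec (2 * IZR k) (/ r)); lra.
Qed.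

Lemma eicf_digit_ok_TE r bb et : eicf_digit_ok r bb et ->
  0 < r <= 1 /\ IZR bb + IZR et * TE r = / r.
Proof.
  intro Hok. destruct (eicf_digit_ok_inv_range r bb et Hok) as [Hr [k [Hk [-> Hc]]]].
  assert (Hk1 : 1 <= IZR k) by (apply IZR_le; lia).
  assert (Hr1 : 1 <= / r) by (destruct Hc as [[_ Hw] | [_ Hw]]; lra).
  split; [split; [exact Hr|] | exact (TE_spec r k et Hr Hk Hc)].
  rewrite <- (Rinv_inv r), <- Rinv_1. apply Rinv_le_contravar; lra.
Qed.

Definition eicf_map (bb et : Z) (s : R) : R := / (IZR bb + IZR et * s).

Lemma eicf_map_range bb et s : eicf_digit bb et -> 0 <= s <= 1 -> 0 < eicf_map bb et s <= 1.
Proof.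
  intros [Hb [_ He]] Hs. unfold eicf_map.
  assert (2 <= IZR bb) by (apply IZR_le; exact Hb).
  assert (1 <= IZR bb + IZR et * s) by (destruct He as [-> | ->]; simpl; lra).
  split; [apply Rinv_0_lt_compat; lra|].
  rewrite <- Rinv_1. apply Rinv_le_contravar; lra.
Qed.

Definition eicf_step (M : mat) (bb et : Z) : mat :=
  Mat (et * mP M) (mA M + bb * mP M) (et * mQ M) (mB M + bb * mQ M).

(* The parities of [(A, P, B, Q)] alternate between (odd, even, even, odd) and
   (even, odd, odd, even) from one step to the next. *)
Definition eicf_inv (M : mat) : Prop :=
  (0 < mQ M)%Z /\ (Z.abs (mB M) < mQ M)%Z /\ unimodular M /\
  Z.odd (mQ M) = Z.odd (mA M) /\ Z.odd (mP M) = Z.odd (mB M) /\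
  Z.odd (mP M) = negb (Z.odd (mA M)).

Lemma eicf_inv_mat1 : eicf_inv mat1.
Proof. split; [|split; [|split; [exact unimodular_mat1 | repeat split]]]; simpl; lia. Qed.

Lemma eicf_step_inv M bb et : eicf_inv M -> eicf_digit bb et -> eicf_inv (eicf_step M bb et).
Proof.
  destruct M as [A P B Q]. unfold eicf_inv, unimodular, eicf_step, eicf_digit; simpl.
  intros [HQ [HB [Hd [H1 [H2 H3]]]]] [Hb [Hbo He]].
  assert (Hdet : (et * P * (B + bb * Q) - et * Q * (A + bb * P) = - et * (A * Q - B * P))%Z)
    by ring.
  assert (HBo : Z.odd B = negb (Z.odd A)) by congruence.
  rewrite Hdet, !Z.odd_add, !Z.odd_mul, Hbo, H1, H3, HBo.
  assert (bb * Q >= 2 * Q)%Z by nia.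
  destruct He as [-> | ->]; (split; [lia|]); (split; [lia|]);
    (split; [destruct Hd as [-> | ->]; lia|]);
    destruct (Z.odd A); repeat split.
Qed.

Lemma mob_eicf_step M bb et s : eicf_inv M -> eicf_digit bb et -> 0 <= s <= 1 ->
  mob (eicf_step M bb et) s = mob M (eicf_map bb et s).
Proof.
  destruct M as [A P B Q]. unfold eicf_inv, eicf_digit, mob, eicf_map, eicf_step; simpl.
  intros [HQ [HB _]] [Hb [_ He]] Hs.
  assert (2 <= IZR bb) by (apply IZR_le; lia).
  assert (HD : 1 <= IZR bb + IZR et * s) by (destruct He as [-> | ->]; simpl; lra).
  assert (HBQ : - IZR Q < IZR B < IZR Q) by (rewrite <- opp_IZR; split; apply IZR_lt; lia).
  assert (IZR Q * 1 <= IZR Q * (IZR bb + IZR et * s)) by (apply Rmult_le_compat_l; lra).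
  rewrite !plus_IZR, !mult_IZR. field. split; lra.
Qed.

Definition eicf_mat (b eta : nat -> Z) : nat -> mat :=
  mat_seq (fun M i => eicf_step M (b i) (eta i)).

Lemma eicf_tail_compose b eta l : forall i,
  / eicf_tail b eta i l = compose_from (fun j => eicf_map (b j) (eta j)) i l 0.
Proof.
  induction l as [|l IH]; intro i; simpl; unfold eicf_map.
  - f_equal. ring.
  - rewrite <- IH. reflexivity.
Qed.

Section EicfMatrices.

Variables b eta : nat -> Z.
Hypothesis Hdig : forall i, (1 <= i)%nat -> eicf_digit (b i) (eta i).

Lemma eicf_mat_inv n : eicf_inv (eicf_mat b eta n).
Proof.
  unfold eicf_mat. apply mat_seq_inv; [exact eicf_inv_mat1|].
  intros M i Hi HM. exact (eicf_step_inv M _ _ HM (Hdig i Hi)).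
Qed.

Lemma eicf_conv_pos n : 0 < eicf_conv b eta n.
Proof.
  unfold eicf_conv. rewrite eicf_tail_compose.
  apply compose_from_range; [|lia|lra].
  intros i s Hi Hs. exact (eicf_map_range _ _ s (Hdig i Hi) Hs).
Qed.

Lemma eicf_conv_mob n : (1 <= n)%nat -> eicf_conv b eta n = mob (eicf_mat b eta n) 0.
Proof.
  intro Hn. unfold eicf_conv, eicf_mat. rewrite eicf_tail_compose.
  rewrite (compose_from_mat_seq _ (fun M i => eicf_step M (b i) (eta i)) eicf_inv);
    [| exact eicf_inv_mat1 | | | | lra].
  - f_equal. f_equal. lia.
  - intros M i Hi HM. exact (eicf_step_inv M _ _ HM (Hdig i Hi)).
  - intros M i s Hi HM Hs. exact (mob_eicf_step M _ _ s HM (Hdig i Hi) Hs).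
  - intros i s Hi Hs. destruct (eicf_map_range _ _ s (Hdig i Hi) Hs). lra.
Qed.

End EicfMatrices.

Lemma eicf_mat_tail y b eta
  (hexp : forall n : nat, (1 <= n)%nat ->
            eicf_digit_ok (Nat.iter (n - 1) TE y) (b n) (eta n)) n :
  y = mob (eicf_mat b eta n) (Nat.iter n TE y).
Proof.
  assert (Hok : forall n, eicf_digit_ok (Nat.iter n TE y) (b (S n)) (eta (S n))).
  { intro k. pose proof (hexp (S k) ltac:(lia)) as Hk.
    rewrite Nat.sub_succ, Nat.sub_0_r in Hk. exact Hk. }
  assert (Hdig : forall i, (1 <= i)%nat -> eicf_digit (b i) (eta i))
    by (intros i Hi; exact (eicf_digit_ok_digit _ _ _ (hexp i Hi))).
  induction n as [|n IH]; [symmetry; apply mob1|].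
  destruct (eicf_digit_ok_TE _ _ _ (Hok n)) as [Hr E].
  destruct (eicf_digit_ok_TE _ _ _ (Hok (S n))) as [Hr' _].
  change (eicf_mat b eta (S n)) with (eicf_step (eicf_mat b eta n) (b (S n)) (eta (S n))).
  rewrite mob_eicf_step; [| apply eicf_mat_inv; exact Hdig | apply Hdig; lia |].
  - unfold eicf_map. simpl Nat.iter at 1. rewrite E, Rinv_inv. exact IH.
  - simpl in Hr' |- *. lra.
Qed.

Lemma eicf_tail_bound B Q d u v t : (Z.abs B < Q)%Z ->
  Z.odd u = false -> u <> 0%Z -> Z.odd v = true -> (u * B + v * Q = d)%Z ->
  (0 < d <= Q)%Z -> 0 < t < 1 -> t < Rabs (IZR v * t - IZR u).
Proof.
  intros HB Hu Hu0 Hv Hd Hdq Ht.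
  destruct (Rlt_or_le t (Rabs (IZR v * t - IZR u))) as [H|H]; [exact H | exfalso].
  destruct (tail_bound_cases u v t Hu Hu0 Hv Ht H); nia.
Qed.

Lemma eicf_den_pos M t : eicf_inv M -> 0 <= t <= 1 -> 0 < IZR (mB M) * t + IZR (mQ M).
Proof.
  intros [HQ [HB _]] Ht.
  assert (- IZR (mQ M) < IZR (mB M) < IZR (mQ M))
    by (rewrite <- opp_IZR; split; apply IZR_lt; lia).
  nra.
Qed.

Lemma eicf_best_approx M y t : eicf_inv M -> Z.odd (mQ M) = true ->
  y = mob M t -> 0 < t < 1 -> irrational y -> best_even_odd_approx y (mP M) (mQ M).
Proof.
  intros HM HQo Hy Ht Hirr c d Hc Hd Hdq Hne.
  pose proof HM as [HQ [HB [Hdet [H1 [_ H3]]]]].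
  assert (Hden := eicf_den_pos M t HM ltac:(lra)).
  apply (better_approx_of_tail_bound M y t); auto.
  - congruence.
  - rewrite H3, <- H1, HQo. reflexivity.
  - rewrite Hy. apply mob_cross. lra.
  - lra.
  - intros u v Hu Hu0 Hv Ed. exact (eicf_tail_bound _ _ d u v t HB Hu Hu0 Hv Ed Hdq Ht).
Qed.

(** * The OOCF side *)

Definition oocf_digit (z : R) : Z * Z :=
  let k := oocf_k z in
  if Rle_dec z ((2 * IZR k - 1) / (2 * IZR k + 1)) then ((k + 1)%Z, (-1)%Z) else (k, 1%Z).

Definition oocf_map (a e : Z) (s : R) : R := / (IZR a + IZR e / (2 - s)).

Lemma oocf_k_spec z : 0 <= z < 1 ->
  (1 <= oocf_k z)%Z /\ IZR (oocf_k z) * (1 - z) <= 1 < (IZR (oocf_k z) + 1) * (1 - z).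
Proof.
  intro Hz. unfold oocf_k.
  destruct (Zfloor_spec (/ (1 - z))) as [Hk1 Hk2].
  assert (Hw : / (1 - z) * (1 - z) = 1) by (field; lra).
  assert (1 <= / (1 - z)) by (rewrite <- Rinv_1; apply Rinv_le_contravar; lra).
  split; [|split; nra].
  apply IZR_lt_succ_le. lra.
Qed.

Lemma oocf_step_left z k : (1 <= k)%Z -> IZR k * (1 - z) <= 1 ->
  z <= (2 * IZR k - 1) / (2 * IZR k + 1) ->
  let T := (IZR k * z - (IZR k - 1)) / (IZR k - (IZR k + 1) * z) in
  oocf_D (k + 1) (-1) /\ oocf_B (k + 1) (-1) z /\ 0 <= T <= 1 /\
  1 - z = oocf_map (k + 1) (-1) (1 - T).
Proof.
  intros Hk Hlo Hle T. unfold T, oocf_map, oocf_D, oocf_B.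
  assert (HK : 1 <= IZR k) by (apply IZR_le; lia).
  apply le_div_iff in Hle; [|lra].
  assert (HD : 0 < IZR k - (IZR k + 1) * z) by nra.
  rewrite plus_IZR. simpl (IZR 1). simpl (IZR (-1)).
  replace (IZR k + 1 - 1) with (IZR k) by ring.
  split; [right; split; [lia | right; reflexivity]|].
  split; [right; split; [reflexivity | split; [apply div_le_iff | apply le_div_iff]; lra]|].
  split; [split; [apply le_div_iff | apply div_le_iff]; lra|].
  field. repeat split; nra.
Qed.

Lemma oocf_step_right z k : (1 <= k)%Z -> 1 < (IZR k + 1) * (1 - z) ->
  ~ z <= (2 * IZR k - 1) / (2 * IZR k + 1) ->
  let T := (IZR k - (IZR k + 1) * z) / (IZR k * z - (IZR k - 1)) in
  oocf_D k 1 /\ oocf_B k 1 z /\ 0 <= T <= 1 /\ 1 - z = oocf_map k 1 (1 - T).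
Proof.
  intros Hk Hhi Hgt T. unfold T, oocf_map, oocf_D, oocf_B.
  assert (HK : 1 <= IZR k) by (apply IZR_le; lia).
  assert (Hgt' : 2 * IZR k - 1 < z * (2 * IZR k + 1)).
  { apply Rnot_le_lt. intro H. apply Hgt, le_div_iff; lra. }
  assert (HD : 0 < IZR k * z - (IZR k - 1)) by nra.
  simpl (IZR 1).
  split; [destruct (Z.eq_dec k 1); [left | right]; lia|].
  split; [left; split; [reflexivity | split; [apply div_le_iff | apply le_div_iff]; lra]|].
  split; [split; [apply le_div_iff | apply div_le_iff]; lra|].
  field. repeat split; nra.
Qed.

Lemma oocf_step z : 0 <= z < 1 ->
  let a := fst (oocf_digit z) in let e := snd (oocf_digit z) in
  oocf_D a e /\ oocf_B a e z /\ 0 <= Toocf z <= 1 /\ 1 - z = oocf_map a e (1 - Toocf z).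
Proof.
  intro Hz. destruct (oocf_k_spec z Hz) as [Hk [Hlo Hhi]].
  unfold oocf_digit, Toocf. destruct (Req_EM_T z 1) as [E|_]; [lra|]. cbv zeta.
  destruct (Rle_dec z _) as [Hle|Hgt]; simpl.
  - exact (oocf_step_left z _ Hk Hlo Hle).
  - exact (oocf_step_right z _ Hk Hhi Hgt).
Qed.

Definition oocf_mstep (M : mat) (a e : Z) : mat :=
  Mat (- mA M - a * mP M) (2 * mA M + (2 * a + e) * mP M)
      (- mB M - a * mQ M) (2 * mB M + (2 * a + e) * mQ M).

Definition oocf_inv (M : mat) : Prop :=
  (0 < mQ M)%Z /\ (- mQ M < mB M <= 0)%Z /\ unimodular M /\
  Z.odd (mA M) = true /\ Z.odd (mP M) = false /\ Z.odd (mQ M) = true.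

Lemma oocf_inv_mat1 : oocf_inv mat1.
Proof. split; [|split; [|split; [exact unimodular_mat1 | repeat split]]]; simpl; lia. Qed.

Lemma oocf_mstep_inv M a e : oocf_inv M -> oocf_D a e ->
  oocf_inv (oocf_mstep M a e) /\ (mQ M < mQ (oocf_mstep M a e))%Z.
Proof.
  destruct M as [A P B Q]. unfold oocf_inv, unimodular, oocf_mstep, oocf_D; cbn [mA mP mB mQ].
  intros [HQ [HB [Hd [H1 [H2 H3]]]]] HD.
  assert (Hdet : ((- A - a * P) * (2 * B + (2 * a + e) * Q)
                  - (- B - a * Q) * (2 * A + (2 * a + e) * P) = - e * (A * Q - B * P))%Z)
    by ring.
  rewrite Hdet, Z.odd_sub, Z.odd_opp, !Z.odd_add, !Z.odd_mul, H1, H2, H3.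
  destruct HD as [[-> ->] | [Ha [-> | ->]]];
    (split; [|nia]); (split; [nia|]); (split; [nia|]);
    (split; [destruct Hd as [-> | ->]; lia|]);
    rewrite ?Z.odd_add, ?Z.odd_mul; simpl; try destruct (Z.odd a); auto.
Qed.

Lemma oocf_den_pos M s : oocf_inv M -> 0 <= s <= 1 -> 0 < IZR (mB M) * s + IZR (mQ M).
Proof.
  intros [HQ [HB _]] Hs.
  assert (- IZR (mQ M) < IZR (mB M)) by (rewrite <- opp_IZR; apply IZR_lt; lia).
  assert (IZR (mB M) <= 0) by (apply IZR_le; lia).
  nra.
Qed.

Lemma oocf_map_range a e s : oocf_D a e -> 0 <= s <= 1 -> 0 < oocf_map a e s <= 1.
Proof.
  intros HD Hs. unfold oocf_map, Rdiv.
  assert (0 < / (2 - s) <= 1)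
    by (split; [apply Rinv_0_lt_compat | rewrite <- Rinv_1; apply Rinv_le_contravar]; lra).
  assert (1 <= IZR a + IZR e * / (2 - s)).
  { destruct HD as [[-> ->] | [Ha [-> | ->]]]; simpl; [lra | |];
      assert (2 <= IZR a) by (apply IZR_le; exact Ha); lra. }
  split; [apply Rinv_0_lt_compat; lra|].
  rewrite <- Rinv_1. apply Rinv_le_contravar; lra.
Qed.

Lemma mob_oocf_mstep M a e s : oocf_inv M -> oocf_D a e -> 0 <= s <= 1 ->
  mob (oocf_mstep M a e) s = mob M (oocf_map a e s).
Proof.
  destruct M as [A P B Q]. unfold oocf_inv, oocf_D, mob, oocf_mstep, oocf_map; cbn [mA mP mB mQ].
  intros [HQ [HB _]] HD Hs.
  assert (HQ' : 0 < IZR Q) by (apply IZR_lt; lia).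
  assert (HB1 : - IZR Q < IZR B) by (rewrite <- opp_IZR; apply IZR_lt; lia).
  assert (HB2 : IZR B <= 0) by (apply IZR_le; lia).
  assert (Hden : 1 <= IZR a /\ 2 - s <= IZR a * (2 - s) + IZR e).
  { destruct HD as [[-> ->] | [Ha [-> | ->]]]; simpl; [split; lra | |];
      assert (2 <= IZR a) by (apply IZR_le; exact Ha); split; nra. }
  destruct Hden as [Ha1 Hden].
  assert (0 < IZR B * (2 - s) + IZR Q * (IZR a * (2 - s) + IZR e)) by nra.
  assert (0 < IZR B + IZR a * IZR Q) by nra.
  rewrite ?plus_IZR, ?minus_IZR, ?opp_IZR, ?mult_IZR, ?plus_IZR, ?mult_IZR. simpl (IZR 2).
  replace (/ (IZR a + IZR e / (2 - s))) with ((2 - s) / (IZR a * (2 - s) + IZR e)) by (field; lra).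
  field. lra.
Qed.

Definition oocf_mat (a e : nat -> Z) : nat -> mat :=
  mat_seq (fun M i => oocf_mstep M (a i) (e i)).

Lemma oocf_tail_compose a e l : forall i,
  / oocf_tail a e i l = compose_from (fun j => oocf_map (a j) (e j)) i l 0.
Proof.
  induction l as [|l IH]; intro i; simpl; unfold oocf_map.
  - do 3 f_equal. ring.
  - rewrite <- IH. reflexivity.
Qed.

Section OocfMatrices.

Variables a e : nat -> Z.
Hypothesis HD : forall i, (1 <= i)%nat -> oocf_D (a i) (e i).

Lemma oocf_mat_inv n : oocf_inv (oocf_mat a e n).
Proof.
  unfold oocf_mat. apply mat_seq_inv; [exact oocf_inv_mat1|].
  intros M i Hi HM. exact (proj1 (oocf_mstep_inv M _ _ HM (HD i Hi))).
Qed.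

Lemma oocf_mat_Q_lt n : (mQ (oocf_mat a e n) < mQ (oocf_mat a e (S n)))%Z.
Proof. exact (proj2 (oocf_mstep_inv _ _ _ (oocf_mat_inv n) (HD (S n) ltac:(lia)))). Qed.

Lemma oocf_conv_mob n : (1 <= n)%nat -> oocf_conv a e n = 1 - mob (oocf_mat a e n) 0.
Proof.
  intro Hn. unfold oocf_conv, oocf_mat. rewrite oocf_tail_compose.
  rewrite (compose_from_mat_seq _ (fun M i => oocf_mstep M (a i) (e i)) oocf_inv);
    [| exact oocf_inv_mat1 | | | | lra].
  - do 3 f_equal. lia.
  - intros M i Hi HM. exact (proj1 (oocf_mstep_inv M _ _ HM (HD i Hi))).
  - intros M i s Hi HM Hs. exact (mob_oocf_mstep M _ _ s HM (HD i Hi) Hs).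
  - intros i s Hi Hs. destruct (oocf_map_range _ _ s (HD i Hi) Hs). lra.
Qed.

End OocfMatrices.

Definition oocf_orbit (x : R) (m : nat) : R := Nat.iter m Toocf x.
Definition oocf_a (x : R) (n : nat) : Z := fst (oocf_digit (oocf_orbit x (n - 1))).
Definition oocf_e (x : R) (n : nat) : Z := snd (oocf_digit (oocf_orbit x (n - 1))).

Section OocfOrbit.

Variable x : R.
Hypothesis Hirr : irrational (1 - x).
Hypothesis Hx : 0 <= x < 1.

(* Each OOCF step is a Moebius map with integer coefficients, so [1 - z] stays irrational. *)
Lemma oocf_orbit_irrational m : 0 < oocf_orbit x m < 1 /\ irrational (1 - oocf_orbit x m).
Proof.
  induction m as [|m [Hz Hzirr]].
  - split; [|exact Hirr]. pose proof (irrational_ne_IZR _ 1 Hirr) as Hx0. simpl in *. lra.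
  - destruct (oocf_step (oocf_orbit x m) ltac:(lra)) as [HD [_ [HT Hmap]]].
    change (oocf_orbit x (S m)) with (Toocf (oocf_orbit x m)).
    set (d := oocf_digit (oocf_orbit x m)) in *.
    assert (Hnext : irrational (1 - Toocf (oocf_orbit x m))).
    { apply (mob_irrational (oocf_mstep mat1 (fst d) (snd d))).
      - apply Rgt_not_eq, oocf_den_pos; [apply (oocf_mstep_inv _ _ _ oocf_inv_mat1 HD) | lra].
      - rewrite mob_oocf_mstep, mob1, <- Hmap by (exact oocf_inv_mat1 || exact HD || lra).
        exact Hzirr. }
    pose proof (irrational_ne_IZR _ 0 Hnext). pose proof (irrational_ne_IZR _ 1 Hnext).
    simpl in *. split; [lra | exact Hnext].
Qed.

Lemma oocf_orbit_digit m :
  oocf_D (oocf_a x (S m)) (oocf_e x (S m)) /\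
  oocf_B (oocf_a x (S m)) (oocf_e x (S m)) (oocf_orbit x m) /\
  1 - oocf_orbit x m = oocf_map (oocf_a x (S m)) (oocf_e x (S m)) (1 - oocf_orbit x (S m)).
Proof.
  unfold oocf_a, oocf_e. rewrite Nat.sub_succ, Nat.sub_0_r.
  destruct (oocf_orbit_irrational m) as [Hz _].
  destruct (oocf_step (oocf_orbit x m) ltac:(lra)) as [HD [HB [_ Hmap]]].
  auto.
Qed.

Lemma oocf_expansion : is_oocf_expansion x (oocf_a x) (oocf_e x).
Proof.
  intros n Hn. destruct n as [|m]; [lia|].
  rewrite Nat.sub_succ, Nat.sub_0_r.
  destruct (oocf_orbit_digit m) as [HD [HB _]]. auto.
Qed.

Lemma oocf_digits_D i : (1 <= i)%nat -> oocf_D (oocf_a x i) (oocf_e x i).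
Proof. intro Hi. destruct i as [|m]; [lia | exact (proj1 (oocf_orbit_digit m))]. Qed.

Lemma oocf_mat_orbit m : 1 - x = mob (oocf_mat (oocf_a x) (oocf_e x) m) (1 - oocf_orbit x m).
Proof.
  induction m as [|m IH]; [symmetry; apply mob1|].
  destruct (oocf_orbit_digit m) as [HD [_ Hmap]].
  destruct (oocf_orbit_irrational (S m)) as [Hz _].
  change (oocf_mat (oocf_a x) (oocf_e x) (S m))
    with (oocf_mstep (oocf_mat (oocf_a x) (oocf_e x) m) (oocf_a x (S m)) (oocf_e x (S m))).
  rewrite mob_oocf_mstep, <- Hmap; [exact IH | | exact HD | lra].
  apply oocf_mat_inv, oocf_digits_D.
Qed.

End OocfOrbit.

Lemma oocf_cylinder_bound a e t : oocf_D a e -> oocf_B a e (1 - t) ->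
  (e = 1%Z /\ 1 <= IZR a /\ t * (2 * IZR a + 1) <= 2) \/
  (e = (-1)%Z /\ (2 <= a)%Z /\ t * (IZR a - 1) <= 1).
Proof.
  intros HD [[-> [Hlo _]] | [-> [Hlo _]]].
  - left. assert (1 <= IZR a) by (apply IZR_le; unfold oocf_D in HD; lia).
    apply div_le_iff in Hlo; [|lra]. repeat split; lra.
  - right. assert (Ha : (2 <= a)%Z) by (unfold oocf_D in HD; lia).
    assert (2 <= IZR a) by (apply IZR_le; exact Ha).
    apply div_le_iff in Hlo; [|lra]. repeat split; [exact Ha | lra].
Qed.

Lemma irrational_strict_upper t u v : irrational t -> u <> 0%Z ->
  IZR u <= (IZR v + 1) * t -> IZR u < (IZR v + 1) * t.
Proof.
  intros Hirr Hu0 [H | E]; [exact H | exfalso].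
  destruct (Z.eq_dec v (-1)) as [-> | Hv].
  - apply Hu0, eq_IZR. rewrite E. simpl. ring.
  - apply (Hirr u (v + 1)%Z); [lia|]. rewrite E, plus_IZR. field.
    intro X. apply Hv, eq_IZR. simpl in X |- *. lra.
Qed.

Lemma oocf_plus_case B Q w v a : (- Q < B <= 0)%Z -> (1 <= a)%Z -> (1 <= w)%Z ->
  (w * (2 * a + 1) <= v)%Z -> (2 * B + (2 * a + 1) * Q <= 2 * w * B + v * Q)%Z.
Proof.
  intros HB Ha Hw Hv.
  assert (0 <= 2 * B + (2 * a + 1) * Q)%Z by nia.
  assert (0 <= (w - 1) * (2 * B + (2 * a + 1) * Q))%Z by (apply Z.mul_nonneg_nonneg; lia).
  assert (0 <= (v - w * (2 * a + 1)) * Q)%Z by (apply Z.mul_nonneg_nonneg; lia).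
  nia.
Qed.

Lemma oocf_minus_case B Q w v a : (- Q < B <= 0)%Z -> (2 <= a)%Z -> (1 <= w)%Z ->
  (2 * w * (a - 1) + 1 <= v)%Z -> (2 * B + (2 * a - 1) * Q <= 2 * w * B + v * Q)%Z.
Proof.
  intros HB Ha Hw Hv.
  assert (0 <= B + (a - 1) * Q)%Z by nia.
  assert (0 <= (w - 1) * (B + (a - 1) * Q))%Z by (apply Z.mul_nonneg_nonneg; lia).
  assert (0 <= (v - 2 * w * (a - 1) - 1) * Q)%Z by (apply Z.mul_nonneg_nonneg; lia).
  nia.
Qed.

Lemma oocf_tail_bound B Q d u v a e t : (- Q < B <= 0)%Z ->
  Z.odd u = false -> u <> 0%Z -> Z.odd v = true -> (u * B + v * Q = d)%Z ->
  (0 < d < 2 * B + (2 * a + e) * Q)%Z -> oocf_D a e -> oocf_B a e (1 - t) ->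
  0 < t < 1 -> irrational t -> t < Rabs (IZR v * t - IZR u).
Proof.
  intros HB Hu Hu0 Hv Hd Hdq HD HBt Ht Hirr.
  destruct (Rlt_or_le t (Rabs (IZR v * t - IZR u))) as [H|H]; [exact H | exfalso].
  destruct (tail_bound_cases u v t Hu Hu0 Hv Ht H) as [Hneg | [Hu1 Huv]]; [nia|].
  assert (Hup : IZR u < (IZR v + 1) * t).
  { apply irrational_strict_upper; [exact Hirr | exact Hu0|].
    unfold Rabs in H. destruct Rcase_abs in H; lra. }
  pose proof (Z.div2_odd u) as Eu. rewrite Hu in Eu. cbn [Z.b2z] in Eu.
  set (w := Z.div2 u) in Eu.
  assert (Hv1 : 0 < IZR v + 1) by (rewrite <- plus_IZR; apply IZR_lt; lia).
  destruct (oocf_cylinder_bound a e t HD HBt) as [[-> [Ha Hc]] | [-> [Ha Hc]]].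
  - assert (Hi : (u * (2 * a + 1) < 2 * (v + 1))%Z).
    { apply lt_IZR. rewrite !mult_IZR, !plus_IZR, mult_IZR. simpl (IZR 1). simpl (IZR 2).
      apply Rlt_le_trans with ((IZR v + 1) * t * (2 * IZR a + 1)); [apply Rmult_lt_compat_r; lra|].
      nra. }
    assert (1 <= a)%Z by (apply le_IZR; exact Ha).
    pose proof (oocf_plus_case B Q w v a HB ltac:(lia) ltac:(lia) ltac:(nia)). nia.
  - assert (Hi : (u * (a - 1) < v + 1)%Z).
    { apply lt_IZR. rewrite !mult_IZR, minus_IZR, plus_IZR. simpl (IZR 1).
      assert (2 <= IZR a) by (apply IZR_le; exact Ha).
      apply Rlt_le_trans with ((IZR v + 1) * t * (IZR a - 1)); [apply Rmult_lt_compat_r; lra|].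
      nra. }
    assert (Hne : (u * (a - 1) <> v)%Z)
      by (intro X; rewrite <- X, Z.odd_mul, Hu in Hv; discriminate).
    pose proof (oocf_minus_case B Q w v a HB Ha ltac:(lia) ltac:(nia)). nia.
Qed.

Lemma oocf_best_approx M y t a e c d : oocf_inv M -> y = mob M t ->
  oocf_D a e -> oocf_B a e (1 - t) -> 0 < t < 1 -> irrational y ->
  Z.odd c = false -> Z.odd d = true -> (0 < d < mQ (oocf_mstep M a e))%Z ->
  IZR c / IZR d <> IZR (mP M) / IZR (mQ M) ->
  Rabs (IZR (mQ M) * y - IZR (mP M)) < Rabs (IZR d * y - IZR c).
Proof.
  intros HM Hy HD HBt Ht Hirr Hc Hd Hdq Hne.
  pose proof HM as [HQ [HB [Hdet [HA [HP HQo]]]]].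
  assert (Hden := oocf_den_pos M t HM ltac:(lra)).
  assert (Htirr : irrational t)
    by (apply (mob_irrational M); [lra | rewrite <- Hy; exact Hirr]).
  apply (better_approx_of_tail_bound M y t); auto.
  - rewrite Hy. apply mob_cross. lra.
  - lra.
  - intros u v Hu Hu0 Hv Ed.
    exact (oocf_tail_bound _ _ d u v a e t HB Hu Hu0 Hv Ed Hdq HD HBt Ht Htirr).
Qed.

Section OocfBest.

Variables (x : R) (P Q : Z).
Hypotheses (Hx : 0 < x < 1) (Hirr : irrational (1 - x)).
Hypotheses (HP : Z.odd P = false) (HQo : Z.odd Q = true).
Hypothesis Hbest : best_even_odd_approx (1 - x) P Q.

Let a := oocf_a x.
Let e := oocf_e x.

Lemma oocf_convergent_eq_of_best m :
  (mQ (oocf_mat a e m) <= Q < mQ (oocf_mat a e (S m)))%Z ->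
  IZR P / IZR Q = mob (oocf_mat a e m) 0.
Proof.
  intros [Hm1 Hm2]. rewrite mob_0.
  set (N := oocf_mat a e m) in *.
  assert (HN : oocf_inv N) by exact (oocf_mat_inv a e (oocf_digits_D x Hirr ltac:(lra)) m).
  pose proof HN as [HQN [_ [_ [_ [HPN HQNo]]]]].
  destruct (oocf_orbit_digit x Hirr ltac:(lra) m) as [HDm [HBm _]].
  destruct (oocf_orbit_irrational x Hirr ltac:(lra) m) as [Hz _].
  set (t := 1 - oocf_orbit x m).
  assert (HBt : oocf_B (a (S m)) (e (S m)) (1 - t))
    by (unfold t; replace (1 - (1 - oocf_orbit x m)) with (oocf_orbit x m) by ring; exact HBm).
  destruct (Req_dec (IZR P / IZR Q) (IZR (mP N) / IZR (mQ N))) as [E | Hne]; [exact E | exfalso].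
  assert (E1 := Hbest (mP N) (mQ N) HPN HQNo (conj HQN Hm1) (not_eq_sym Hne)).
  assert (E2 := oocf_best_approx N (1 - x) t (a (S m)) (e (S m)) P Q HN
                  (oocf_mat_orbit x Hirr ltac:(lra) m) HDm HBt ltac:(unfold t; lra)
                  Hirr HP HQo (conj (Z.lt_le_trans _ _ _ HQN Hm1) Hm2) Hne).
  lra.
Qed.

Lemma oocf_principal_convergent_of_best : P <> 0%Z -> (0 < Q)%Z ->
  oocf_principal_convergent x (Q - P) Q.
Proof.
  intros HP0 HQ.
  assert (HD : forall i, (1 <= i)%nat -> oocf_D (a i) (e i))
    by exact (oocf_digits_D x Hirr ltac:(lra)).
  destruct (exists_bracketing_index (fun k => mQ (oocf_mat a e k)) Q (oocf_mat_Q_lt a e HD)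
              ltac:(simpl; lia)) as [m Hm].
  assert (Heq := oocf_convergent_eq_of_best m Hm).
  assert (Hm0 : (1 <= m)%nat).
  { destruct m as [|m]; [exfalso | lia].
    apply HP0, eq_IZR. replace (IZR P) with (IZR P / IZR Q * IZR Q)
      by (field; apply not_0_IZR; lia).
    rewrite Heq, mob1. ring. }
  exists a, e. split; [exact (oocf_expansion x Hirr ltac:(lra)) | exists m; split; [exact Hm0|]].
  rewrite (oocf_conv_mob a e HD m Hm0), <- Heq, minus_IZR.
  field. apply not_0_IZR. lia.
Qed.

End OocfBest.

Lemma eicf_iter_range y b eta
  (hexp : forall n : nat, (1 <= n)%nat ->
            eicf_digit_ok (Nat.iter (n - 1) TE y) (b n) (eta n))
  (Hirr : irrational y) n : 0 < Nat.iter n TE y < 1.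
Proof.
  pose proof (hexp (S n) ltac:(lia)) as Hok. rewrite Nat.sub_succ, Nat.sub_0_r in Hok.
  destruct (eicf_digit_ok_TE _ _ _ Hok) as [[Ht0 Ht1] _].
  assert (Hdig : forall i, (1 <= i)%nat -> eicf_digit (b i) (eta i))
    by (intros i Hi; exact (eicf_digit_ok_digit _ _ _ (hexp i Hi))).
  assert (Htirr : irrational (Nat.iter n TE y)).
  { apply (mob_irrational (eicf_mat b eta n)).
    - apply Rgt_not_eq, eicf_den_pos; [apply eicf_mat_inv, Hdig | lra].
    - rewrite <- eicf_mat_tail; assumption. }
  pose proof (irrational_ne_IZR _ 1 Htirr). simpl in *. lra.
Qed.

Theorem mainTheorem12 (x : R) (hx0 : 0 < x) (hx1 : x < 1) (hirr : irrational x)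
  (b eta : nat -> Z)
  (hexp : forall n : nat, (1 <= n)%nat ->
            eicf_digit_ok (Nat.iter (n - 1) TE (1 - x)) (b n) (eta n))
  (n : nat) (hn : (1 <= n)%nat) (p q : Z)
  (hq : (0 < q)%Z) (hpq : Z.gcd p q = 1%Z)
  (hconv : IZR p / IZR q = eicf_conv b eta n)
  (hPodd : Z.odd (q - p) = true) (hQodd : Z.odd q = true) :
  best_one_rational_approx x (q - p) q /\
  oocf_principal_convergent x (q - p) q.
Proof.
  assert (Hirr : irrational (1 - x)) by (apply irrational_one_minus; exact hirr).
  assert (Hdig : forall i, (1 <= i)%nat -> eicf_digit (b i) (eta i))
    by (intros i Hi; exact (eicf_digit_ok_digit _ _ _ (hexp i Hi))).
  set (M := eicf_mat b eta n).
  pose proof (eicf_mat_inv b eta Hdig n) as HM. fold M in HM.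
  pose proof (eicf_conv_pos b eta Hdig n) as Hpos. rewrite <- hconv in Hpos.
  assert (Hp0 : p <> 0%Z) by (intros ->; unfold Rdiv in Hpos; rewrite Rmult_0_l in Hpos; lra).
  assert (Hpeven : Z.odd p = false)
    by (rewrite Z.odd_sub, hQodd in hPodd; destruct (Z.odd p); [discriminate | reflexivity]).
  destruct (reduced_fraction_unique p q (mP M) (mQ M)) as [Ep Eq]; auto.
  { destruct HM as [HQ _]. exact HQ. }
  { destruct HM as [_ [_ [Hdet _]]]. exact (unimodular_gcd M Hdet). }
  { rewrite hconv, eicf_conv_mob, mob_0 by assumption. reflexivity. }
  assert (Hbest : best_even_odd_approx (1 - x) p q).
  { rewrite Ep, Eq. apply (eicf_best_approx M (1 - x) (Nat.iter n TE (1 - x))); auto.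
    - rewrite <- Eq. exact hQodd.
    - apply eicf_mat_tail. exact hexp.
    - exact (eicf_iter_range _ b eta hexp Hirr n). }
  split.
  - apply best_one_rational_approx_one_minus; auto.
  - apply oocf_principal_convergent_of_best; auto.
Qed.
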